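(* Let $\mathcal H_s\cong\mathbb C^d$, $\mathcal H_u\cong\mathbb C^k$, let $\chi\in\mathcal H_u$ be a unit vector and $U$ a unitary on $\mathcal H_s\otimes\mathcal H_u$ such that the transition operator $T(\rho)=\mathrm{Tr}_u\big(U(\rho\otimes|\chi\rangle\langle\chi|)U^*\big)$ is primitive, with stationary state $\rho_{ss}$. Let $\mathcal H_a\cong\mathbb C^d$ be an additional (absorber) system. Then there exist a unit vector $\tilde\psi\in\mathcal H_s\otimes\mathcal H_a$ with $\mathrm{Tr}_a|\tilde\psi\rangle\langle\tilde\psi|=\rho_{ss}$ and a unitary $V$ on $\mathcal H_a\otimes\mathcal H_u$ such that, with $W:=(\mathbf 1_s\otimes V)(U\otimes\mathbf 1_a)$ acting on $\mathcal H_s\otimes\mathcal H_a\otimes\mathcal H_u$ (with the obvious reordering of tensor factors), $$W(\tilde\psi\otimes\chi)=\tilde\psi\otimes\chi .$$ In particular, if the doubled-up system $\mathcal H_s\otimes\mathcal H_a$ starts in $\tilde\psi$ and interacts successively via $W$ with $n$ noise units each prepared in $\chi$, the joint final state is $\tilde\psi\otimes\chi^{\otimes n}$, so the output state of the $n$ noise units equals the input state $\chi^{\otimes n}$.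
   Context: A quantum Markov chain (discrete-time input-output system) consists of a system $\mathcal H_s$ interacting successively via a fixed unitary $U$ on $\mathcal H_s\otimes\mathcal H_u$ with independent noise units, each prepared in state $\chi$. Primitive means $T$ has a unique full-rank stationary state $\rho_{ss}$ ($T(\rho_{ss})=\rho_{ss}$) and $1$ is the only eigenvalue of $T$ on the unit circle. *)

(* Tensor products use mathcomp-real-closed's [tensmx] (A *t B), whose index
   convention is mxtens_index (i, j) = i * n + j (first factor major). *)
From HB Require Import structures.
From mathcomp Require Import all_boot all_order all_algebra.
From mathcomp Require Import reals.
From mathcomp.real_closed Require Import complex mxtens.
From mathcomp Require Import sesquilinear spectral.
Set Implicit Arguments. Unset Strict Implicit. Unset Printing Implicit Defensive.
Import Order.TTheory GRing.Theory Num.Theory.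
Local Open Scope ring_scope.
Local Open Scope sesquilinear_scope.

Section QMC.
Variable C : numClosedFieldType.

Definition ptrace2 {m n : nat} (M : 'M[C]_(m * n)) : 'M[C]_m :=
  \matrix_(i, j) \sum_(l < n) M (mxtens_index (i, l)) (mxtens_index (j, l)).

Definition ketbra {n : nat} (v : 'cV[C]_n) : 'M[C]_n := v *m v ^t*.

Definition unit_vec {n : nat} (v : 'cV[C]_n) : Prop := v ^t* *m v = 1%:M.

Definition psd {n : nat} (A : 'M[C]_n) : Prop :=
  A ^t* = A /\ forall v : 'cV[C]_n, 0 <= (v ^t* *m A *m v) 0 0.
Definition density {n : nat} (rho : 'M[C]_n) : Prop := psd rho /\ \tr rho = 1.

Definition transition {d k : nat} (U : 'M[C]_(d * k)) (chi : 'cV[C]_k)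
  (rho : 'M[C]_d) : 'M[C]_d :=
  ptrace2 (U *m (rho *t ketbra chi) *m U ^t*).

Definition primitive {d : nat} (T : 'M[C]_d -> 'M[C]_d) : Prop :=
  (exists rho : 'M[C]_d,
      [/\ density rho, T rho = rho, \rank rho = d &
          forall rho' : 'M[C]_d, density rho' -> T rho' = rho' -> rho' = rho])
  /\ (forall (z : C) (X : 'M[C]_d), X != 0 -> T X = z *: X -> `|z| = 1 -> z = 1).

(* Operators on H_s ⊗ H_a ⊗ H_u, indexed ((s, a), u), i.e. 'I_(d * d' * k). *)
Definition idx_s {d d' k : nat} (x : 'I_(d * d' * k)) : 'I_d :=
  (mxtens_unindex (mxtens_unindex x).1).1.
Definition idx_a {d d' k : nat} (x : 'I_(d * d' * k)) : 'I_d' :=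
  (mxtens_unindex (mxtens_unindex x).1).2.
Definition idx_u {d d' k : nat} (x : 'I_(d * d' * k)) : 'I_k :=
  (mxtens_unindex x).2.

Definition U_tens_1a {d d' k : nat} (U : 'M[C]_(d * k)) : 'M[C]_(d * d' * k) :=
  \matrix_(x, y)
    (U (mxtens_index (idx_s x, idx_u x)) (mxtens_index (idx_s y, idx_u y))
     * (idx_a x == idx_a y)%:R).

Definition one_s_tens_V {d d' k : nat} (V : 'M[C]_(d' * k)) : 'M[C]_(d * d' * k) :=
  \matrix_(x, y)
    ((idx_s x == idx_s y)%:R
     * V (mxtens_index (idx_a x, idx_u x)) (mxtens_index (idx_a y, idx_u y))).

End QMC.

From HB Require Import structures.
From mathcomp Require Import all_boot all_order all_algebra.
From mathcomp Require Import reals.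
From mathcomp.real_closed Require Import complex mxtens.
From mathcomp Require Import sesquilinear spectral.
Import Order.TTheory GRing.Theory Num.Theory Num.Def.
Local Open Scope ring_scope.
Local Open Scope sesquilinear_scope.

(* Write the stationary state as a Gram matrix, rho_ss = Psi Psi^*, and take
   psi := vec Psi, so that Tr_a |psi><psi| = rho_ss.  Read psi ⊗ chi and
   (U ⊗ 1_a)(psi ⊗ chi) as d × (d*k) matrices X and Y (rows indexed by H_s,
   columns by H_a ⊗ H_u).  Their Gram matrices are Tr_u (rho_ss ⊗ |chi><chi|)
   = rho_ss and T(rho_ss) = rho_ss.  Primitivity makes rho_ss invertible, so
   X = Y W for a unitary W on H_a ⊗ H_u, and V := W^T acting on the absorber
   and the noise unit undoes the action of U on psi ⊗ chi. *)

Set Implicit Arguments. Unset Strict Implicit. Unset Printing Implicit Defensive.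

Section Purification.
Variable C : numClosedFieldType.

Lemma trmxC_mul m n p (A : 'M[C]_(m, n)) (B : 'M[C]_(n, p)) :
  (A *m B)^t* = B^t* *m A^t*.
Proof. by rewrite trmx_mul map_mxM. Qed.

Lemma trmxC_tens m n p q (A : 'M[C]_(m, n)) (B : 'M[C]_(p, q)) :
  (A *t B)^t* = A^t* *t B^t*.
Proof. by rewrite trmx_tens map_mxT. Qed.

Lemma psd_gram m n (X : 'M[C]_(m, n)) : psd (X *m X^t*).
Proof.
split; first by rewrite trmxC_mul trmxCK.
move=> v; have -> : v^t* *m (X *m X^t*) *m v = (X^t* *m v)^t* *m (X^t* *m v).
  by rewrite trmxC_mul trmxCK !mulmxA.
rewrite mxE.
by apply: sumr_ge0 => i _; rewrite !mxE mulrC mul_conjC_ge0.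
Qed.

Lemma psd_factor n (rho : 'M[C]_n) : psd rho ->
  exists Psi : 'M[C]_n, Psi *m Psi^t* = rho.
Proof.
case=> herm pos.
have /orthomx_spectralP : rho \is normalmx by apply/normalmxP; rewrite herm.
have Pu := spectral_unitarymx rho.
set P := spectralmx rho; set l := spectral_diag rho.
rewrite invmx_unitary // => erho.
have l_ge0 i : 0 <= l 0 i.
  have := pos (P^t* *m delta_mx i 0); rewrite erho trmxC_mul trmxCK.
  have -> : (delta_mx i 0 : 'cV[C]_n)^t* = delta_mx 0 i.
    by apply/matrixP => a b; rewrite !mxE rmorph_nat andbC.
  rewrite !mulmxA -[delta_mx 0 i *m P *m P^t*]mulmxA.
  rewrite (unitarymxP Pu) mulmx1 -[_ *m diag_mx l *m P *m P^t*]mulmxA.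
  rewrite (unitarymxP Pu) mulmx1 -rowE row_diag_mx -scalemxAl mul_delta_mx.
  by rewrite !mxE !eqxx mulr1.
exists (P^t* *m diag_mx (map_mx (fun x : C => sqrtC x) l)).
rewrite trmxC_mul trmxCK tr_diag_mx map_diag_mx mulmxA -[P^t* *m _ *m _]mulmxA.
rewrite mulmx_diag erho; congr (_ *m diag_mx _ *m _); apply/matrixP => a b.
rewrite !mxE ord1; change (sqrtC (l 0 b) * (sqrtC (l 0 b))^* = l 0 b).
by rewrite geC0_conj ?sqrtC_ge0 // -expr2 sqrtCK.
Qed.

Local Notation "B ^!" :=
  (orthomx conjC (mx_of_hermitian (hermitian1mx _)) B) : matrix_set_scope.

(* Complete the orthonormal rows of [T] by an orthonormal basis of [T^!]. *)
Lemma unitarymx_completion p m (T : 'M[C]_(p, m)) : T \is unitarymx ->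
  exists2 S : 'M[C]_m, S \is unitarymx & pid_mx p *m S = T.
Proof.
move=> Tu; have rT : \rank T = p := mxrank_unitary Tu.
pose B := schmidt (row_base T^!%MS).
have Bu : B \is unitarymx by apply: schmidt_unitarymx; rewrite rank_leq_col.
have TB0 : T *m B^t* = 0.
  apply/orthomx1P; rewrite (eqmx_ortho _ (eqmx_schmidt_free (row_base_free _))).
  by rewrite (eqmx_ortho _ (eq_row_base _)) ortho_id.
have BT0 : B *m T^t* = 0 by rewrite -[B]trmxCK -trmxC_mul TB0 trmx0 map_mx0.
have TBu : col_mx T B \is unitarymx.
  apply/unitarymxP; rewrite tr_col_mx map_row_mx mul_col_row.
  by rewrite !(unitarymxP _) // TB0 BT0 -scalar_mx_block.
have pidTB : pid_mx p *m col_mx T B = T.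
  by rewrite pid_mx_row mul_row_col mul1mx mul0mx addr0.
have : (p + \rank T^!)%N = m by rewrite rank_ortho rT subnKC // -rT rank_leq_col.
move=> E; move: (col_mx T B) TBu pidTB; rewrite E => S Su eS.
by exists S.
Qed.

Lemma unitarymx_invmx_mul m n (B : 'M[C]_m) (X : 'M[C]_(m, n)) :
  B *m B^t* = X *m X^t* -> B \in unitmx -> invmx B *m X \is unitarymx.
Proof.
move=> BX Bu; apply/unitarymxP.
rewrite trmxC_mul mulmxA -[invmx B *m X *m _]mulmxA -BX mulmxA mulVmx // mul1mx.
by rewrite -trmxC_mul mulVmx // trmx1 map_mx1.
Qed.

Lemma gram_eq_unitarymx p m (X Y : 'M[C]_(p, m)) :
  X *m X^t* = Y *m Y^t* -> X *m X^t* \in unitmx ->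
  exists2 W : 'M[C]_m, W \is unitarymx & X = Y *m W.
Proof.
move=> XY XXu; have [B eB] := psd_factor (psd_gram X).
have Bu : B \in unitmx by move: XXu; rewrite -eB unitmx_mul => /andP[].
have [S1 S1u eS1] := unitarymx_completion (unitarymx_invmx_mul eB Bu).
rewrite XY in eB.
have [S2 S2u eS2] := unitarymx_completion (unitarymx_invmx_mul eB Bu).
exists (S2^t* *m S1); first by rewrite mul_unitarymx ?trmxC_unitary.
rewrite -[X](mulKVmx Bu) -[Y](mulKVmx Bu) -eS1 -eS2 !mulmxA.
by rewrite -[_ *m S2 *m S2^t*]mulmxA (unitarymxP S2u) mulmx1.
Qed.
End Purification.

Section TensorIndices.
Variable C : numClosedFieldType.

Lemma sum_mxtens_index m n (F : 'I_(m * n) -> C) :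
  \sum_i F i = \sum_(a < m) \sum_(b < n) F (mxtens_index (a, b)).
Proof.
rewrite pair_big /= (reindex (@mxtens_index m n)) /=; last first.
  by exists (fun x => mxtens_unindex x) => x _; rewrite (mxtens_indexK, mxtens_unindexK).
by apply: eq_bigr => -[a b].
Qed.

Lemma sum_delta_mull n (F : 'I_n -> C) a : \sum_i (a == i)%:R * F i = F a.
Proof.
rewrite (bigD1 a) //= eqxx mul1r big1 ?addr0 // => i.
by rewrite eq_sym => /negPf ->; rewrite mul0r.
Qed.

Lemma ptrace2_tens m n (A : 'M[C]_m) (B : 'M[C]_n) :
  ptrace2 (A *t B) = \tr B *: A.
Proof.
apply/matrixP => i j; rewrite !mxE mulrC mulr_sumr.
by apply: eq_bigr => l _; rewrite tensmxE.
Qed.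

Lemma trace_ketbra n (v : 'cV[C]_n) : unit_vec v -> \tr (ketbra v) = 1.
Proof. by rewrite /ketbra mxtrace_mulC => ->; rewrite mxtrace1. Qed.

Definition vectens m n (Psi : 'M[C]_(m, n)) : 'cV[C]_(m * n) :=
  \col_x Psi (mxtens_unindex x).1 (mxtens_unindex x).2.

Lemma vectens_normE m n (Psi : 'M[C]_(m, n)) :
  (vectens Psi)^t* *m vectens Psi = (\tr (Psi *m Psi^t*))%:M.
Proof.
apply/matrixP => a b; rewrite !ord1 !mxE sum_mxtens_index /=.
apply: eq_bigr => s _; rewrite mxE; apply: eq_bigr => t _.
by rewrite !mxE mxtens_indexK mulrC.
Qed.

Lemma ptrace2_ketbra_vectens m n (Psi : 'M[C]_(m, n)) :
  ptrace2 (ketbra (vectens Psi)) = Psi *m Psi^t*.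
Proof.
apply/matrixP => i j; rewrite !mxE; apply: eq_bigr => l _.
by rewrite !mxE big_ord1 !mxE !mxtens_indexK.
Qed.

(* [regroup z] reorders the factors of [z] in (C^m ⊗ C^n) ⊗ C^k as
   (C^m ⊗ C^k) ⊗ C^n, the last factor becoming the column index; [reshape F]
   then makes the first factor the row index, so [reshape (regroup z)] is
   [z] read as an m × (n*k) matrix. *)
Definition regroup m n k (z : 'cV[C]_(m * n * k)) : 'M[C]_(m * k, n * 1) :=
  \matrix_(x, y) z (mxtens_index (mxtens_index ((mxtens_unindex x).1,
                     (mxtens_unindex y).1), (mxtens_unindex x).2)) 0.

Definition reshape m n k (F : 'M[C]_(m * k, n * 1)) : 'M[C]_(m, n * k) :=
  \matrix_(s, e) F (mxtens_index (s, (mxtens_unindex e).2))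
                   (mxtens_index ((mxtens_unindex e).1, ord0)).

Lemma reshape_gram m n k (F : 'M[C]_(m * k, n * 1)) :
  reshape F *m (reshape F)^t* = ptrace2 (F *m F^t*).
Proof.
apply/matrixP => i j; rewrite !mxE sum_mxtens_index exchange_big /=.
apply: eq_bigr => u _; rewrite !mxE sum_mxtens_index.
apply: eq_bigr => a _; rewrite big_ord1 !mxE !mxtens_indexK /=.
by rewrite (ord1 (ord0 : 'I_1)).
Qed.

Lemma regroup_vectens_tens m n k (Psi : 'M[C]_(m, n)) (chi : 'cV[C]_k) :
  regroup (vectens Psi *t chi) = Psi *t chi.
Proof.
apply/matrixP => x y.
case: (mxtens_indexP x) => s u; case: (mxtens_indexP y) => a o.
by rewrite !mxE !mxtens_indexK /= !ord1.
Qed.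

Lemma reshape_regroupE m n k (z : 'cV[C]_(m * n * k)) s a u :
  reshape (regroup z) s (mxtens_index (a, u))
  = z (mxtens_index (mxtens_index (s, a), u)) 0.
Proof. by rewrite !mxE !mxtens_indexK. Qed.

Lemma reshape_regroup_inj m n k (z1 z2 : 'cV[C]_(m * n * k)) :
  reshape (regroup z1) = reshape (regroup z2) -> z1 = z2.
Proof.
move=> /matrixP e12; apply/matrixP => x j; rewrite ord1.
case: (mxtens_indexP x) => sa u; case: (mxtens_indexP sa) => s a.
by rewrite -!reshape_regroupE e12.
Qed.

Lemma regroup_U_tens_1a m n k (U : 'M[C]_(m * k)) (z : 'cV[C]_(m * n * k)) :
  regroup (U_tens_1a U *m z) = U *m regroup z.
Proof.
apply/matrixP => x y.
case: (mxtens_indexP x) => s u; case: (mxtens_indexP y) => a o.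
rewrite !mxE !mxtens_indexK /= !sum_mxtens_index; apply: eq_bigr => s' _.
rewrite exchange_big /=; apply: eq_bigr => u' _.
under eq_bigr do rewrite !mxE /idx_s /idx_a /idx_u !mxtens_indexK /= mulrAC mulrC.
by rewrite sum_delta_mull !mxE !mxtens_indexK.
Qed.

Lemma reshape_regroup_one_s_tens_V m n k (V : 'M[C]_(n * k))
    (z : 'cV[C]_(m * n * k)) :
  reshape (regroup (one_s_tens_V V *m z)) = reshape (regroup z) *m V^T.
Proof.
apply/matrixP => s e; case: (mxtens_indexP e) => a u.
rewrite reshape_regroupE !mxE !sum_mxtens_index.
under eq_bigr do under eq_bigr do under eq_bigr do
  rewrite mxE /idx_s /idx_a /idx_u !mxtens_indexK /= -mulrA.
under eq_bigr do under eq_bigr do rewrite -mulr_sumr.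
under eq_bigr do rewrite -mulr_sumr.
rewrite sum_delta_mull; apply: eq_bigr => a' _; apply: eq_bigr => u' _.
by rewrite reshape_regroupE mxE mulrC.
Qed.

End TensorIndices.

Theorem mainTheorem1 (R : realType) (d k : nat)
  (U : 'M[R[i]]_(d * k)) (chi : 'cV[R[i]]_k) (rho_ss : 'M[R[i]]_d) :
  U \is unitarymx ->
  unit_vec chi ->
  primitive (transition U chi) ->
  density rho_ss ->
  transition U chi rho_ss = rho_ss ->
  exists (psi : 'cV[R[i]]_(d * d)) (V : 'M[R[i]]_(d * k)),
    [/\ unit_vec psi,
        ptrace2 (ketbra psi) = rho_ss,
        V \is unitarymx &
        (one_s_tens_V V *m U_tens_1a U) *m (psi *t chi)
          = psi *t chi].
Proof.
move=> Uu chiu [[rho [_ _ rk_rho rho_uniq]] _] dens fix_rho_ss.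
have rho_ss_unit : rho_ss \in unitmx.
  by rewrite -row_free_unit /row_free (rho_uniq _ dens fix_rho_ss) rk_rho.
have [Psi ePsi] := psd_factor dens.1.
pose z := vectens Psi *t chi.
have ketbra_z : Psi *t chi *m (Psi *t chi)^t* = rho_ss *t ketbra chi.
  by rewrite trmxC_tens tensmx_mul ePsi.
have gram_in : reshape (regroup z) *m (reshape (regroup z))^t* = rho_ss.
  rewrite reshape_gram regroup_vectens_tens ketbra_z ptrace2_tens.
  by rewrite trace_ketbra // scale1r.
have gram_out : reshape (regroup (U_tens_1a U *m z))
                  *m (reshape (regroup (U_tens_1a U *m z)))^t* = rho_ss.
  rewrite reshape_gram regroup_U_tens_1a regroup_vectens_tens trmxC_mul.
  by rewrite mulmxA -(mulmxA U) ketbra_z; exact: fix_rho_ss.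
have [W Wu in_out_W] := gram_eq_unitarymx (etrans gram_in (esym gram_out))
                                          (ltac:(by rewrite gram_in)).
exists (vectens Psi), W^T; split.
- by rewrite /unit_vec vectens_normE ePsi (proj2 dens).
- by rewrite ptrace2_ketbra_vectens.
- by rewrite trmx_unitary.
- apply: reshape_regroup_inj.
  by rewrite -mulmxA reshape_regroup_one_s_tens_V trmxK -in_out_W.
Qed.
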